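(* Let $n\ge0$ and let $(\eta,\xi)$ be an $n$-Lie-isoclinism from $\mathfrak g_1$ to $\mathfrak g_2$. Let $\mathcal K=\{(g,h)\in\mathfrak g_1\oplus\mathfrak g_2:\eta(g+\mathcal Z_n^{\mathsf{Lie}}(\mathfrak g_1))=h+\mathcal Z_n^{\mathsf{Lie}}(\mathfrak g_2)\}$, $Z_{\mathfrak g_1}=\{(g,0):g\in\mathcal Z_n^{\mathsf{Lie}}(\mathfrak g_1)\}$, $Z_{\mathfrak g_2}=\{(0,h):h\in\mathcal Z_n^{\mathsf{Lie}}(\mathfrak g_2)\}$. Then: (a) $\mathcal K$ is a subalgebra of $\mathfrak g_1\oplus\mathfrak g_2$; (b) $\gamma_{n+1}^{\mathsf{Lie}}(\mathcal K)=\{(g,\xi(g)):g\in\gamma_{n+1}^{\mathsf{Lie}}(\mathfrak g_1)\}$; (c) $Z_{\mathfrak g_1}$ and $Z_{\mathfrak g_2}$ are two-sided ideals of $\mathcal K$ with $Z_{\mathfrak g_i}\cap\gamma_{n+1}^{\mathsf{Lie}}(\mathcal K)=0$ for $i=1,2$; (d) for $\{i,j\}=\{1,2\}$, $\mathfrak g_i\cong\mathcal K/Z_{\mathfrak g_j}$ and $\mathcal K/Z_{\mathfrak g_j}\sim_n\mathcal K$.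
   Context: All Leibniz algebras are over a field $\mathbb{K}$ with $\frac12\in\mathbb{K}$. A Leibniz algebra is a vector space $\mathfrak g$ with a bilinear bracket $[-,-]$ satisfying $[x,[y,z]]=[[x,y],z]-[[x,z],y]$. For $x,y\in\mathfrak g$ put $[x,y]_{lie}=[x,y]+[y,x]$. For two-sided ideals $\mathfrak m,\mathfrak n$ of $\mathfrak g$, $[\mathfrak m,\mathfrak n]_{\mathsf{Lie}}$ denotes the two-sided ideal of $\mathfrak g$ generated by $\{[m,x]_{lie}: m\in\mathfrak m, x\in\mathfrak n\}$. Lower Lie-central series: $\gamma_1^{\mathsf{Lie}}(\mathfrak g)=\mathfrak g$, $\gamma_i^{\mathsf{Lie}}(\mathfrak g)=[\gamma_{i-1}^{\mathsf{Lie}}(\mathfrak g),\mathfrak g]_{\mathsf{Lie}}$ for $i\ge2$. Upper Lie-central series: $\mathcal Z_0^{\mathsf{Lie}}(\mathfrak g)=0$, $\mathcal Z_i^{\mathsf{Lie}}(\mathfrak g)=\{x\in\mathfrak g:[x,y]_{lie}\in\mathcal Z_{i-1}^{\mathsf{Lie}}(\mathfrak g)\ \text{for all } y\in\mathfrak g\}$ for $i\ge1$. For $n\ge0$, Leibniz algebras $\mathfrak g_1,\mathfrak g_2$ are $n$-Lie-isoclinic, written $\mathfrak g_1\sim_n\mathfrak g_2$, if there exist Leibniz algebra isomorphisms $\eta:\mathfrak g_1/\mathcal Z_n^{\mathsf{Lie}}(\mathfrak g_1)\to\mathfrak g_2/\mathcal Z_n^{\mathsf{Lie}}(\mathfrak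 g_2)$ and $\xi:\gamma_{n+1}^{\mathsf{Lie}}(\mathfrak g_1)\to\gamma_{n+1}^{\mathsf{Lie}}(\mathfrak g_2)$ such that $\xi([\cdots[[x_1,x_2]_{lie},x_3]_{lie},\ldots,x_{n+1}]_{lie})=[\cdots[[y_1,y_2]_{lie},y_3]_{lie},\ldots,y_{n+1}]_{lie}$ whenever $x_i\in\mathfrak g_1$, $y_i\in\mathfrak g_2$ satisfy $\eta(x_i+\mathcal Z_n^{\mathsf{Lie}}(\mathfrak g_1))=y_i+\mathcal Z_n^{\mathsf{Lie}}(\mathfrak g_2)$ for $i=1,\ldots,n+1$; $(\eta,\xi)$ is then called an $n$-Lie-isoclinism from $\mathfrak g_1$ to $\mathfrak g_2$. *)

(* Leibniz algebras over a field K are encoded by an explicit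
   record (carrier, K-vector-space operations, bracket, axioms), because
   general (possibly infinite-dimensional) Leibniz algebras, their subalgebras,
   direct sums and quotients are not available in MathComp. *)
From HB Require Import structures.
From mathcomp Require Import all_boot all_algebra.
From Stdlib Require Import ClassicalEpsilon FunctionalExtensionality
  PropExtensionality ProofIrrelevance.
Set Implicit Arguments. Unset Strict Implicit. Unset Printing Implicit Defensive.
Import GRing.Theory.
Local Open Scope ring_scope.

(* A Leibniz algebra over K: a K-vector space (additive inverse written as
   scaling by -1) with a bilinear bracket satisfying
   [x,[y,z]] = [[x,y],z] - [[x,z],y]. *)
Record leibniz (K : fieldType) := Leibniz {
  lcar :> Type;
  lzero : lcar;
  ladd : lcar -> lcar -> lcar;
  lscale : K -> lcar -> lcar;
  lbr : lcar -> lcar -> lcar;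
  laddA : forall x y z, ladd x (ladd y z) = ladd (ladd x y) z;
  laddC : forall x y, ladd x y = ladd y x;
  ladd0 : forall x, ladd lzero x = x;
  laddN : forall x, ladd x (lscale (-1) x) = lzero;
  lscale1 : forall x, lscale 1 x = x;
  lscaleA : forall a b x, lscale a (lscale b x) = lscale (a * b) x;
  lscaleDr : forall a x y, lscale a (ladd x y) = ladd (lscale a x) (lscale a y);
  lscaleDl : forall a b x, lscale (a + b) x = ladd (lscale a x) (lscale b x);
  lbrDl : forall x y z, lbr (ladd x y) z = ladd (lbr x z) (lbr y z);
  lbrZl : forall a x y, lbr (lscale a x) y = lscale a (lbr x y);
  lbrDr : forall x y z, lbr x (ladd y z) = ladd (lbr x y) (lbr x z);
  lbrZr : forall a x y, lbr x (lscale a y) = lscale a (lbr x y);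
  lleibniz : forall x y z,
    lbr x (lbr y z) = ladd (lbr (lbr x y) z) (lscale (-1) (lbr (lbr x z) y))
}.
Arguments lzero {K L} : rename.
Arguments ladd {K L} : rename.
Arguments lscale {K L} : rename.
Arguments lbr {K L} : rename.

Section Basics.
Variables (K : fieldType) (L : leibniz K).
Implicit Types (x y z : L) (S X M N : L -> Prop).

Definition lsub x y := ladd x (lscale (-1) y).

Definition subspace S :=
  [/\ S lzero, (forall x y, S x -> S y -> S (ladd x y))
    & (forall a x, S x -> S (lscale a x))].
Definition subalgebra S := subspace S /\ (forall x y, S x -> S y -> S (lbr x y)).
Definition ideal S :=
  subspace S /\ (forall x y, S x -> S (lbr x y) /\ S (lbr y x)).

Definition subalg_gen X x := forall S, subalgebra S -> (forall y, X y -> S y) -> S x.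
Definition ideal_gen X x := forall S, ideal S -> (forall y, X y -> S y) -> S x.

Definition lie x y := ladd (lbr x y) (lbr y x).

Definition lieComm M N :=
  ideal_gen (fun z => exists m x, [/\ M m, N x & z = lie m x]).

(* gamma_aux k = gamma_{k+1}^Lie *)
Fixpoint gamma_aux (k : nat) : L -> Prop :=
  match k with
  | 0 => fun _ => True
  | k'.+1 => lieComm (gamma_aux k') (fun _ => True)
  end.
(* lower Lie-central series, gammaLie i = gamma_i^Lie for i >= 1 *)
Definition gammaLie (i : nat) := gamma_aux i.-1.

Fixpoint ZLie (i : nat) : L -> Prop :=
  match i with
  | 0 => fun x => x = lzero
  | i'.+1 => fun x => forall y, ZLie i' (lie x y)
  end.

Fixpoint commIter (x : nat -> L) (k : nat) : L :=
  match k with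
  | 0 => x 0%N
  | k'.+1 => lie (commIter x k') (x k)
  end.

Lemma ladd0r x : ladd x lzero = x.
Proof. by rewrite laddC ladd0. Qed.

Lemma laddACA (a b c d : L) : ladd (ladd a b) (ladd c d) = ladd (ladd a c) (ladd b d).
Proof.
rewrite -!laddA; congr (ladd a _).
by rewrite !laddA (laddC b c).
Qed.

Lemma lsub_add x y x' y' : lsub (ladd x y) (ladd x' y') = ladd (lsub x x') (lsub y y').
Proof. by rewrite /lsub lscaleDr laddACA. Qed.

Lemma lsub_scale a x x' : lsub (lscale a x) (lscale a x') = lscale a (lsub x x').
Proof. by rewrite /lsub lscaleDr !lscaleA mulrC. Qed.

Lemma lsub_trans x y z : ladd (lsub x y) (lsub y z) = lsub x z.
Proof.
rewrite /lsub -laddA; congr (ladd x _).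
by rewrite laddA (laddC _ y) laddN ladd0.
Qed.

Lemma lsub_opp x y : lscale (-1) (lsub x y) = lsub y x.
Proof. by rewrite /lsub lscaleDr lscaleA mulrNN mulr1 lscale1 laddC. Qed.

Lemma lsubrr x : lsub x x = lzero.
Proof. exact: laddN. Qed.

Lemma lbr_sub_l x y z : lsub (lbr x z) (lbr y z) = lbr (lsub x y) z.
Proof. by rewrite /lsub lbrDl lbrZl. Qed.

Lemma lbr_sub_r x y z : lsub (lbr z x) (lbr z y) = lbr z (lsub x y).
Proof. by rewrite /lsub lbrDr lbrZr. Qed.

Lemma ideal_gen_ideal X : ideal (ideal_gen X).
Proof.
split; first split.
- by move=> S [[? _ _] _] _.
- move=> x y hx hy S hS hXS; have [[_ hA _] _] := hS.
  exact: hA (hx S hS hXS) (hy S hS hXS).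
- move=> a x hx S hS hXS; have [[_ _ hZ] _] := hS; exact: hZ (hx S hS hXS).
- move=> x y hx; split=> S hS hXS; have [_ hB] := hS;
    by have [] := hB x y (hx S hS hXS).
Qed.

Lemma subalg_gen_subalgebra X : subalgebra (subalg_gen X).
Proof.
split; first split.
- by move=> S [[? _ _] _] _.
- move=> x y hx hy S hS hXS; have [[_ hA _] _] := hS.
  exact: hA (hx S hS hXS) (hy S hS hXS).
- move=> a x hx S hS hXS; have [[_ _ hZ] _] := hS; exact: hZ (hx S hS hXS).
- move=> x y hx hy S hS hXS; have [_ hB] := hS.
  exact: hB _ _ (hx S hS hXS) (hy S hS hXS).
Qed.

End Basics.

Arguments subspace {K L}.
Arguments subalgebra {K L}.
Arguments ideal {K L}.
Arguments subalg_gen {K L}.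
Arguments ideal_gen {K L}.
Arguments lie {K L}.
Arguments gammaLie {K} L i.
Arguments ZLie {K} L i.
Arguments commIter {K L}.

Definition is_hom (K : fieldType) (L1 L2 : leibniz K) (f : L1 -> L2) :=
  [/\ forall x y, f (ladd x y) = ladd (f x) (f y),
      forall a x, f (lscale a x) = lscale a (f x)
    & forall x y, f (lbr x y) = lbr (f x) (f y)].
Definition is_iso (K : fieldType) (L1 L2 : leibniz K) (f : L1 -> L2) :=
  is_hom f /\ bijective f.
Definition isomorphic (K : fieldType) (L1 L2 : leibniz K) :=
  exists f : L1 -> L2, is_iso f.

Section DSum.
Variables (K : fieldType) (L1 L2 : leibniz K).
Definition dcar := (lcar L1 * lcar L2)%type.
Definition dzero : dcar := (lzero, lzero).
Definition dadd (p q : dcar) : dcar := (ladd p.1 q.1, ladd p.2 q.2).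
Definition dscale (a : K) (p : dcar) : dcar := (lscale a p.1, lscale a p.2).
Definition dbr (p q : dcar) : dcar := (lbr p.1 q.1, lbr p.2 q.2).

Definition dsum : leibniz K.
Proof.
refine (@Leibniz K dcar dzero dadd dscale dbr _ _ _ _ _ _ _ _ _ _ _ _ _).
- by move=> [? ?] [? ?] [? ?]; rewrite /dadd /= !laddA.
- by move=> [? ?] [? ?]; rewrite /dadd /=; congr pair; apply: laddC.
- by move=> [? ?]; rewrite /dadd /= !ladd0.
- by move=> [? ?]; rewrite /dadd /dscale /= !laddN.
- by move=> [? ?]; rewrite /dscale /= !lscale1.
- by move=> a b [? ?]; rewrite /dscale /= !lscaleA.
- by move=> a [? ?] [? ?]; rewrite /dscale /dadd /= !lscaleDr.
- by move=> a b [? ?]; rewrite /dscale /dadd /= !lscaleDl.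
- by move=> [? ?] [? ?] [? ?]; rewrite /dbr /dadd /= !lbrDl.
- by move=> a [? ?] [? ?]; rewrite /dbr /dscale /= !lbrZl.
- by move=> [? ?] [? ?] [? ?]; rewrite /dbr /dadd /= !lbrDr.
- by move=> a [? ?] [? ?]; rewrite /dbr /dscale /= !lbrZr.
- by move=> [? ?] [? ?] [? ?]; rewrite /dbr /dadd /dscale /= !lleibniz.
Defined.
End DSum.

Section Sub.
Variables (K : fieldType) (L : leibniz K) (S : L -> Prop).
Definition scar := {x : L | subalg_gen S x}.

Lemma sinj (x y : scar) : sval x = sval y -> x = y.
Proof.
case: x y => [x hx] [y hy] /= e; subst y.
by rewrite (proof_irrelevance _ hx hy).
Qed.

Let hS := subalg_gen_subalgebra S.
Definition szero : scar := exist _ lzero (let: conj (And3 h _ _) _ := hS in h).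
Definition sadd (x y : scar) : scar :=
  exist _ (ladd (sval x) (sval y))
    (let: conj (And3 _ h _) _ := hS in h _ _ (proj2_sig x) (proj2_sig y)).
Definition sscale a (x : scar) : scar :=
  exist _ (lscale a (sval x))
    (let: conj (And3 _ _ h) _ := hS in h a _ (proj2_sig x)).
Definition sbr (x y : scar) : scar :=
  exist _ (lbr (sval x) (sval y))
    (let: conj _ h := hS in h _ _ (proj2_sig x) (proj2_sig y)).

Definition sub : leibniz K.
Proof.
refine (@Leibniz K scar szero sadd sscale sbr _ _ _ _ _ _ _ _ _ _ _ _ _);
  intros; apply: sinj => /=.
- exact: laddA.
- exact: laddC.
- exact: ladd0.
- exact: laddN.
- exact: lscale1.
- exact: lscaleA.
- exact: lscaleDr.
- exact: lscaleDl.
- exact: lbrDl.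
- exact: lbrZl.
- exact: lbrDr.
- exact: lbrZr.
- exact: lleibniz.
Defined.
End Sub.

Section Quot.
Variables (K : fieldType) (L : leibniz K) (I : L -> Prop).
Let J := ideal_gen I.
Let hJ : ideal J := ideal_gen_ideal I.

Definition qcoset (x : L) : L -> Prop := fun y => J (lsub y x).
Definition qcar := {A : L -> Prop | exists x, A = qcoset x}.
Definition cls (x : L) : qcar := exist _ (qcoset x) (ex_intro _ x erefl).
Definition rep (A : qcar) : L :=
  proj1_sig (constructive_indefinite_description _ (proj2_sig A)).

Lemma qinj (A B : qcar) : sval A = sval B -> A = B.
Proof.
case: A B => [A hA] [B hB] /= e; subst B.
by rewrite (proof_irrelevance _ hA hB).
Qed.

Lemma repK A : cls (rep A) = A.
Proof.
apply: qinj => /=; rewrite /rep.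
by case: (constructive_indefinite_description _ _) => x /= ->.
Qed.

Lemma clsP A : exists x, A = cls x.
Proof. by exists (rep A); rewrite repK. Qed.

Definition eqm x y := J (lsub x y).

Lemma eqm_refl x : eqm x x.
Proof. by rewrite /eqm lsubrr; case: hJ => -[]. Qed.

Lemma eqm_sym x y : eqm x y -> eqm y x.
Proof. by rewrite /eqm -(lsub_opp x y); case: hJ => -[_ _ h] _ /h. Qed.

Lemma eqm_trans x y z : eqm x y -> eqm y z -> eqm x z.
Proof. by rewrite /eqm -(lsub_trans x y z); case: hJ => -[_ h _] _; apply: h. Qed.

Lemma cls_eq x y : eqm x y -> cls x = cls y.
Proof.
move=> e; apply: qinj => /=; apply: functional_extensionality => z.
apply: propositional_extensionality; rewrite /qcoset; split => h.
- exact: eqm_trans h e.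
- exact: eqm_trans h (eqm_sym e).
Qed.

Lemma eqm_rep x : eqm (rep (cls x)) x.
Proof.
have := f_equal sval (repK (cls x)) => /= e.
have := eqm_refl (rep (cls x)); rewrite /eqm -/(qcoset _ _).
by rewrite e.
Qed.

Lemma eqm_add x x' y y' : eqm x x' -> eqm y y' -> eqm (ladd x y) (ladd x' y').
Proof. by rewrite /eqm lsub_add; case: hJ => -[_ h _] _; apply: h. Qed.

Lemma eqm_scale a x x' : eqm x x' -> eqm (lscale a x) (lscale a x').
Proof. by rewrite /eqm lsub_scale; case: hJ => -[_ _ h] _; apply: h. Qed.

Lemma eqm_br x x' y y' : eqm x x' -> eqm y y' -> eqm (lbr x y) (lbr x' y').
Proof.
move=> ex ey; apply: (@eqm_trans _ (lbr x' y)).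
- by rewrite /eqm lbr_sub_l; case: hJ => _ h; case: (h _ y ex).
- by rewrite /eqm lbr_sub_r; case: hJ => _ h; case: (h _ x' ey).
Qed.

Definition qzero : qcar := cls lzero.
Definition qadd (A B : qcar) : qcar := cls (ladd (rep A) (rep B)).
Definition qscale a (A : qcar) : qcar := cls (lscale a (rep A)).
Definition qbr (A B : qcar) : qcar := cls (lbr (rep A) (rep B)).

Lemma qaddE x y : qadd (cls x) (cls y) = cls (ladd x y).
Proof. by apply: cls_eq; apply: eqm_add; apply: eqm_rep. Qed.
Lemma qscaleE a x : qscale a (cls x) = cls (lscale a x).
Proof. by apply: cls_eq; apply: eqm_scale; apply: eqm_rep. Qed.
Lemma qbrE x y : qbr (cls x) (cls y) = cls (lbr x y).
Proof. by apply: cls_eq; apply: eqm_br; apply: eqm_rep. Qed.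

Definition quot : leibniz K.
Proof.
refine (@Leibniz K qcar qzero qadd qscale qbr _ _ _ _ _ _ _ _ _ _ _ _ _).
- move=> A B C; case: (clsP A) => a ->; case: (clsP B) => b ->.
  by case: (clsP C) => c ->; rewrite !qaddE laddA.
- by move=> A B; case: (clsP A) => a ->; case: (clsP B) => b ->; rewrite !qaddE laddC.
- by move=> A; case: (clsP A) => a ->; rewrite /qzero qaddE ladd0.
- by move=> A; case: (clsP A) => a ->; rewrite !(qaddE, qscaleE, qbrE) laddN.
- by move=> A; case: (clsP A) => a ->; rewrite qscaleE lscale1.
- by move=> s t A; case: (clsP A) => a ->; rewrite !qscaleE lscaleA.
- move=> s A B; case: (clsP A) => a ->; case: (clsP B) => b ->.
  by rewrite !(qaddE, qscaleE, qbrE) lscaleDr.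
- by move=> s t A; case: (clsP A) => a ->; rewrite !(qaddE, qscaleE, qbrE) lscaleDl.
- move=> A B C; case: (clsP A) => a ->; case: (clsP B) => b ->.
  by case: (clsP C) => c ->; rewrite !(qaddE, qscaleE, qbrE) lbrDl.
- by move=> s A B; case: (clsP A) => a ->; case: (clsP B) => b ->;
    rewrite !(qaddE, qscaleE, qbrE) lbrZl.
- move=> A B C; case: (clsP A) => a ->; case: (clsP B) => b ->.
  by case: (clsP C) => c ->; rewrite !(qaddE, qscaleE, qbrE) lbrDr.
- by move=> s A B; case: (clsP A) => a ->; case: (clsP B) => b ->;
    rewrite !(qaddE, qscaleE, qbrE) lbrZr.
- move=> A B C; case: (clsP A) => a ->; case: (clsP B) => b ->.
  case: (clsP C) => c ->.
  by rewrite !(qaddE, qscaleE, qbrE) lleibniz.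
Defined.

Definition qproj (x : L) : quot := cls x.
End Quot.

Arguments qproj {K L} I x.

(* eta : g1 / Z_n^Lie(g1) -> g2 / Z_n^Lie(g2),
   xi  : gamma_{n+1}^Lie(g1) -> gamma_{n+1}^Lie(g2);
   the families x_1..x_{n+1}, y_1..y_{n+1} are indexed by 0..n. *)
Definition n_lie_isoclinism (K : fieldType) (n : nat) (L1 L2 : leibniz K)
  (eta : quot (ZLie L1 n) -> quot (ZLie L2 n))
  (xi : sub (gammaLie L1 n.+1) -> sub (gammaLie L2 n.+1)) :=
  [/\ is_iso eta, is_iso xi &
    forall (x : nat -> L1) (y : nat -> L2),
      (forall i, (i <= n)%N -> eta (qproj (ZLie L1 n) (x i)) = qproj (ZLie L2 n) (y i)) ->
      forall c : sub (gammaLie L1 n.+1),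
        sval c = commIter x n -> sval (xi c) = commIter y n].

Definition n_lie_isoclinic (K : fieldType) (n : nat) (L1 L2 : leibniz K) :=
  exists eta xi, @n_lie_isoclinism K n L1 L2 eta xi.

Set Warnings "-notation-overridden,-ambiguous-paths,-notation-incompatible-prefix".
From HB Require Import structures.
From mathcomp Require Import all_boot all_algebra.
From Stdlib Require Import ClassicalEpsilon.
Set Implicit Arguments. Unset Strict Implicit. Unset Printing Implicit Defensive.
Local Open Scope ring_scope.

(* K is the pullback of g1 -> g1/Z_n(g1) ~ g2/Z_n(g2) <- g2, so its two
   projections are onto, with kernels Z_{g2} and Z_{g1}; this gives the
   isomorphisms of (d). An iterated Lie commutator in K has components c and c'
   built from entries that correspond under eta, so c' = xi(c): gamma_{n+1}(K)
   is the graph of xi, which is (b), and it meets Z_{g1} and Z_{g2} trivially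
   because xi is injective. Finally a quotient map that is injective on
   gamma_{n+1} pulls Z_n back onto Z_n, so the quotient by an ideal meeting
   gamma_{n+1} trivially is n-Lie-isoclinic to the algebra. *)

Section LeibnizAlgebra.
Variables (K : fieldType) (L : leibniz K).
Implicit Types (x y z a b : L) (S : L -> Prop).

Lemma laddNl x : ladd (lscale (-1) x) x = lzero.
Proof. by rewrite laddC laddN. Qed.

Lemma ladd_cancel x y z : ladd x y = ladd x z -> y = z.
Proof. by move=> e; rewrite -(ladd0 y) -(ladd0 z) -(laddNl x) -!laddA e. Qed.

Lemma lscale0r c : lscale c (lzero : L) = lzero.
Proof. by apply: (@ladd_cancel (lscale c lzero)); rewrite -lscaleDr !ladd0r. Qed.

Lemma lbr0l x : lbr (lzero : L) x = lzero.
Proof. by apply: (@ladd_cancel (lbr lzero x)); rewrite -lbrDl !ladd0r. Qed.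

Lemma lbr0r x : lbr x (lzero : L) = lzero.
Proof. by apply: (@ladd_cancel (lbr x lzero)); rewrite -lbrDr !ladd0r. Qed.

Lemma lie0l x : lie (lzero : L) x = lzero.
Proof. by rewrite /lie lbr0l lbr0r ladd0. Qed.

Lemma lieDl x y z : lie (ladd x y) z = ladd (lie x z) (lie y z).
Proof. by rewrite /lie lbrDl lbrDr laddACA. Qed.

Lemma lieZl c x y : lie (lscale c x) y = lscale c (lie x y).
Proof. by rewrite /lie lbrZl lbrZr lscaleDr. Qed.

Lemma lbr_lie z a b : lbr z (lie a b) = lzero.
Proof.
rewrite /lie lbrDr !lleibniz.
by rewrite [ladd (lbr (lbr z b) a) _]laddC laddACA laddN laddNl ladd0.
Qed.

Lemma lbr_liel a b z : lbr (lie a b) z = lie (lie a b) z.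
Proof. by rewrite {2}/lie lbr_lie ladd0r. Qed.

Lemma lie_jacobi a b z :
  lie (lie a b) z = ladd (lie a (lbr b z)) (lie (lbr a z) b).
Proof.
have leib x y w : lbr (lbr x y) w = ladd (lbr x (lbr y w)) (lbr (lbr x w) y).
  by rewrite lleibniz -laddA laddNl ladd0r.
rewrite -lbr_liel {1}/lie lbrDl (leib a b z) (leib b a z) /lie.
by rewrite [ladd (lbr b _) _]laddC laddACA.
Qed.

Lemma lsub0_eq x y : lsub x y = lzero -> x = y.
Proof. by move=> e; apply: (@ladd_cancel (lscale (-1) y)); rewrite laddNl laddC -e. Qed.

Lemma lsubr0 x : lsub x lzero = x.
Proof. by rewrite /lsub lscale0r ladd0r. Qed.

Lemma subspace_addl S x y : subspace S -> S x -> S (ladd x y) -> S y.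
Proof.
move=> [_ hA hZ] hx hxy.
have -> : y = ladd (lscale (-1) x) (ladd x y) by rewrite laddA laddNl ladd0.
by apply: hA => //; apply: hZ.
Qed.

Lemma ideal_gen_in S x : S x -> ideal_gen S x.
Proof. by move=> hx T _; apply. Qed.

Lemma ideal_gen_id S x : ideal S -> ideal_gen S x -> S x.
Proof. by move=> hS; apply. Qed.

Lemma subalg_gen_in S x : S x -> subalg_gen S x.
Proof. by move=> hx T _; apply. Qed.

Lemma subalg_gen_id S x : subalgebra S -> subalg_gen S x -> S x.
Proof. by move=> hS; apply. Qed.

Lemma ideal_subalg S : ideal S -> subalgebra S.
Proof. by case=> h1 h2; split=> // x y hx _; case: (h2 x y hx). Qed.

Lemma ideal0 : ideal (fun x : L => x = lzero).
Proof.
split; first by split=> [|x y -> ->|c x ->]; rewrite ?ladd0 ?lscale0r.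
by move=> x y ->; rewrite lbr0l lbr0r.
Qed.

Lemma idealI S S' : ideal S -> ideal S' -> ideal (fun x => S x /\ S' x).
Proof.
move=> [[h0 hA hZ] hB] [[h0' hA' hZ'] hB']; split; first split.
- by [].
- by move=> x y [? ?] [? ?]; split; [apply: hA|apply: hA'].
- by move=> c x [? ?]; split; [apply: hZ|apply: hZ'].
- by move=> x y [/(hB _ y) [? ?] /(hB' _ y) [? ?]].
Qed.

Lemma ideal_ext S S' : (forall x, S x <-> S' x) -> ideal S -> ideal S'.
Proof.
move=> e [[h0 hA hZ] hB]; split; first split.
- exact/e.
- by move=> x y /e hx /e hy; apply/e/hA.
- by move=> c x /e hx; apply/e/hZ.
- by move=> x y /e /(hB _ y) [? ?]; split; apply/e.
Qed.

Lemma commIter_ext (y y' : nat -> L) k :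
  (forall i, (i <= k)%N -> y i = y' i) -> commIter y k = commIter y' k.
Proof.
elim: k => [|k IH] e /=; first exact: e.
by rewrite IH ?e // => i hi; apply/e/leqW.
Qed.

Lemma commIter_shift (y : nat -> L) k :
  commIter y k.+1 =
  commIter (fun i => if i == 0%N then lie (y 0%N) (y 1%N) else y i.+1) k.
Proof. by elim: k => [|k /= <-]. Qed.

Lemma commIter_set (y : nat -> L) k w :
  lie (commIter y k) w = commIter (fun i => if i == k.+1 then w else y i) k.+1.
Proof.
rewrite /= eqxx; congr lie; apply: commIter_ext => i hi.
by rewrite ifN // neq_ltn ltnS hi.
Qed.

(** * The lower Lie-central series *)

Lemma gamma_subalg k : subalgebra (@gamma_aux _ L k).
Proof.
case: k => [|k]; first by split; first split.
exact/ideal_subalg/ideal_gen_ideal.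
Qed.

Lemma gamma_subspace k : subspace (@gamma_aux _ L k).
Proof. by case: (gamma_subalg k). Qed.

Lemma commIter_gamma (y : nat -> L) k : gamma_aux k (commIter y k).
Proof.
elim: k => [|k IH] //=; apply: ideal_gen_in.
by exists (commIter y k), (y k.+1).
Qed.

Inductive commSpan k : L -> Prop :=
| commSpan_commIter (y : nat -> L) : commSpan k (commIter y k)
| commSpan0 : commSpan k lzero
| commSpanD x y : commSpan k x -> commSpan k y -> commSpan k (ladd x y)
| commSpanZ c x : commSpan k x -> commSpan k (lscale c x).

Lemma commSpan_lie k x w : commSpan k x -> commSpan k.+1 (lie x w).
Proof.
elim=> {x} [y||x y _ hx _ hy|c x _ hx].
- by rewrite commIter_set; apply: commSpan_commIter.
- by rewrite lie0l; apply: commSpan0.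
- by rewrite lieDl; apply: commSpanD.
- by rewrite lieZl; apply: commSpanZ.
Qed.

Lemma commSpan_lbrr k x z : commSpan k.+1 x -> lbr z x = lzero.
Proof.
elim=> {x} [y||x y _ hx _ hy|c x _ hx].
- exact: lbr_lie.
- exact: lbr0r.
- by rewrite lbrDr hx hy ladd0.
- by rewrite lbrZr hx lscale0r.
Qed.

Lemma commSpan_lbr_commIter k (y : nat -> L) z : commSpan k (lbr (commIter y k) z).
Proof.
elim: k y => [|k IH] y /=.
  exact: (commSpan_commIter 0 (fun _ => lbr (y 0%N) z)).
rewrite lbr_liel lie_jacobi commIter_set.
by apply: commSpanD; [apply: commSpan_commIter|apply: commSpan_lie].
Qed.

Lemma commSpan_lbrl k x z : commSpan k x -> commSpan k (lbr x z).
Proof.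
elim=> {x} [y||x y _ hx _ hy|c x _ hx].
- exact: commSpan_lbr_commIter.
- by rewrite lbr0l; apply: commSpan0.
- by rewrite lbrDl; apply: commSpanD.
- by rewrite lbrZl; apply: commSpanZ.
Qed.

Lemma commSpan_ideal k : ideal (commSpan k.+1).
Proof.
split; first by split; [apply: commSpan0|apply: commSpanD|apply: commSpanZ].
move=> x z hx; split; first exact: commSpan_lbrl.
by rewrite (commSpan_lbrr z hx); apply: commSpan0.
Qed.

(* The span of the iterated commutators is already a two-sided ideal, as left
   multiplication kills it ([commSpan_lbrr]). *)
Lemma gamma_commSpan k x : gamma_aux k x <-> commSpan k x.
Proof.
split; last first.
  have [h0 hA hZ] := gamma_subspace k.
  by elim=> {x} [y||x y _ ? _ ?|c x _ ?]; [apply: commIter_gamma|..]; auto.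
elim: k x => [|k IH] x /=; first by move=> _; apply: (commSpan_commIter 0 (fun _ => x)).
move=> h; apply: h; first exact: commSpan_ideal.
by move=> _ [m [w [/IH hm _ ->]]]; apply: commSpan_lie.
Qed.

Lemma gamma_ind k (P : L -> Prop) : subspace P ->
  (forall y : nat -> L, P (commIter y k)) -> forall x, gamma_aux k x -> P x.
Proof.
move=> [h0 hA hZ] hP x /gamma_commSpan.
by elim=> {x} [y||x y _ ? _ ?|c x _ ?]; auto.
Qed.

(** * The upper Lie-central series *)

Lemma ZLie_subspace n : subspace (ZLie L n).
Proof.
elim: n => [|n [h0 hA hZ]] /=; first by case: ideal0.
split=> [y|x y hx hy w|c x hx w]; first by rewrite lie0l.
- by rewrite lieDl; apply: hA.
- by rewrite lieZl; apply: hZ.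
Qed.

Lemma ZLie_mono n x : ZLie L n x -> ZLie L n.+1 x.
Proof.
elim: n x => [|n IH] x /=; first by move=> -> y; rewrite lie0l.
by move=> h y; apply: IH.
Qed.

Lemma ZLie_lie n x w : ZLie L n x -> ZLie L n (lie x w).
Proof. by case: n => [/= ->|n h y]; [rewrite lie0l|apply: ZLie_mono]. Qed.

Lemma ZLie_ideal n : ideal (ZLie L n).
Proof.
split; first exact: ZLie_subspace.
case: n => [|n] x z; first by case: ideal0 => _; apply.
move=> hx; have hxz : ZLie L n.+1 (lbr x z).
  move=> a; apply: (subspace_addl (ZLie_subspace n) (hx (lbr a z))).
  by rewrite -lie_jacobi; apply: ZLie_lie.
split=> //; apply: (subspace_addl (ZLie_subspace n.+1) hxz).
exact/ZLie_mono/hx.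
Qed.

Lemma ZLie_commIter n x :
  ZLie L n x <-> (forall y : nat -> L, y 0%N = x -> commIter y n = lzero).
Proof.
elim: n x => [|n IH] x; first by split=> [/= -> y ->|h]; [|apply: (h (fun _ => x))].
split=> [h y e|h w].
  by rewrite commIter_shift; apply: ((IH (lie x (y 1%N))).1 (h (y 1%N))); rewrite /= e.
apply/IH => y' e'.
pose y i := if i == 0%N then x else if i == 1%N then w else y' i.-1.
rewrite -(h y erefl) commIter_shift; apply: commIter_ext => -[|i] _ //=.
Qed.

End LeibnizAlgebra.

(** * Homomorphisms *)

Section Hom.
Variables (K : fieldType) (A B : leibniz K) (f : A -> B).
Hypothesis f_hom : is_hom f.

Lemma homD x y : f (ladd x y) = ladd (f x) (f y). Proof. by case: f_hom. Qed.
Lemma homZ c x : f (lscale c x) = lscale c (f x). Proof. by case: f_hom. Qed.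
Lemma homB x y : f (lbr x y) = lbr (f x) (f y). Proof. by case: f_hom. Qed.

Lemma hom0 : f lzero = lzero.
Proof. by apply: (@ladd_cancel _ _ (f lzero)); rewrite -homD !ladd0r. Qed.

Lemma hom_lsub x y : f (lsub x y) = lsub (f x) (f y).
Proof. by rewrite /lsub homD homZ. Qed.

Lemma hom_lie x y : f (lie x y) = lie (f x) (f y).
Proof. by rewrite /lie homD !homB. Qed.

Lemma hom_commIter (y : nat -> A) k :
  f (commIter y k) = commIter (fun i => f (y i)) k.
Proof. by elim: k => [|k IH] //=; rewrite hom_lie IH. Qed.

Lemma hom_gamma k x : gamma_aux k x -> gamma_aux k (f x).
Proof.
have [h0 hA hZ] := gamma_subspace B k.
move: x; apply: gamma_ind => [|y]; last by rewrite hom_commIter; apply: commIter_gamma.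
split=> [|x1 x2|c x1]; rewrite ?hom0 ?homD ?homZ //; [exact: hA|exact: hZ].
Qed.

Lemma ideal_preimage S : ideal S -> ideal (fun x => S (f x)).
Proof.
move=> [[h0 hA hZ] hB]; split; first split.
- by rewrite hom0.
- by move=> x y hx hy; rewrite homD; apply: hA.
- by move=> c x hx; rewrite homZ; apply: hZ.
- by move=> x y hx; rewrite !homB; apply: hB.
Qed.

Section Onto.
Hypothesis f_onto : forall b, exists a, f a = b.

Lemma hom_gamma_onto k y : gamma_aux k y -> exists2 x, gamma_aux k x & f x = y.
Proof.
have [h0 hA hZ] := gamma_subspace A k.
move: y; apply: gamma_ind => [|z]; first split.
- by exists lzero; rewrite ?hom0.
- by move=> _ _ [x1 ? <-] [x2 ? <-]; exists (ladd x1 x2); rewrite ?homD //; apply: hA.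
- by move=> c _ [x ? <-]; exists (lscale c x); rewrite ?homZ //; apply: hZ.
have /all_sig[x fx] : forall i, {a | f a = z i}.
  by move=> i; apply: constructive_indefinite_description.
exists (commIter x k); first exact: commIter_gamma.
by rewrite hom_commIter; apply: commIter_ext => i _.
Qed.

Lemma ZLie_image n x : ZLie A n x -> ZLie B n (f x).
Proof.
elim: n x => [|n IH] x /=; first by move=> ->; apply: hom0.
by move=> h w; have [a <-] := f_onto w; rewrite -hom_lie; apply: IH.
Qed.

End Onto.

Lemma ZLie_preimage n x :
  (forall c, gamma_aux n c -> f c = lzero -> c = lzero) ->
  ZLie B n (f x) -> ZLie A n x.
Proof.
move=> f_inj hx; apply/ZLie_commIter => y y0.
apply: f_inj; first exact: commIter_gamma.
by rewrite hom_commIter; apply: ((ZLie_commIter _ _).1 hx); rewrite y0.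
Qed.

End Hom.

Section Constructions.
Variable K : fieldType.

Lemma hom_comp (A B C : leibniz K) (f : A -> B) (g : B -> C) :
  is_hom f -> is_hom g -> is_hom (fun x => g (f x)).
Proof.
move=> hf hg.
by split=> *; rewrite (homD hf, homZ hf, homB hf) (homD hg, homZ hg, homB hg).
Qed.

Lemma sval_hom (L : leibniz K) (S : L -> Prop) : is_hom (fun x : sub S => sval x).
Proof. by []. Qed.

Lemma fst_hom (A B : leibniz K) : is_hom (fun p : dsum A B => p.1).
Proof. by []. Qed.

Lemma snd_hom (A B : leibniz K) : is_hom (fun p : dsum A B => p.2).
Proof. by []. Qed.

Lemma dsum_commIter (A B : leibniz K) (y : nat -> dsum A B) k :
  commIter y k = (commIter (fun i => (y i).1) k, commIter (fun i => (y i).2) k).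
Proof. by elim: k => [|k /= ->]; [rewrite /=; case: (y 0%N)|]. Qed.

Lemma pullback_subalg (A B C : leibniz K) (f : A -> C) (g : B -> C) :
  is_hom f -> is_hom g -> subalgebra (fun p : dsum A B => f p.1 = g p.2).
Proof.
move=> hf hg; split; first split.
- by rewrite /= !hom0.
- by move=> p q hp hq /=; rewrite (homD hf) (homD hg) hp hq.
- by move=> c p hp /=; rewrite (homZ hf) (homZ hg) hp.
- by move=> p q hp hq /=; rewrite (homB hf) (homB hg) hp hq.
Qed.

Lemma qproj_hom (L : leibniz K) (I : L -> Prop) : is_hom (qproj I).
Proof. by split=> *; rewrite /qproj /= ?qaddE ?qscaleE ?qbrE. Qed.

Lemma qproj_onto (L : leibniz K) (I : L -> Prop) (X : quot I) :
  exists x, qproj I x = X.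
Proof. by exists (rep X); apply: repK. Qed.

Lemma qproj_eqP (L : leibniz K) (I : L -> Prop) x y :
  qproj I x = qproj I y <-> ideal_gen I (lsub x y).
Proof.
split; last exact: cls_eq.
move/(f_equal sval) => /= e.
by have := @eqm_refl _ _ I x; rewrite /eqm -/(qcoset I x x) e.
Qed.

Lemma qproj_eq_ideal (L : leibniz K) (I : L -> Prop) x y : ideal I ->
  qproj I x = qproj I y <-> I (lsub x y).
Proof.
move=> hI; rewrite qproj_eqP.
by split; [apply: ideal_gen_id|apply: ideal_gen_in].
Qed.

Lemma qproj_ker (L : leibniz K) (I : L -> Prop) x : ideal I ->
  qproj I x = lzero <-> I x.
Proof. by move=> hI; rewrite -(hom0 (qproj_hom I)) qproj_eq_ideal // lsubr0. Qed.

Lemma is_iso_inverse (A B : leibniz K) (f : A -> B) :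
  is_hom f -> injective f -> (forall b, exists a, f a = b) ->
  exists2 g : B -> A, is_iso g & cancel g f.
Proof.
move=> hf f_inj f_onto.
have /all_sig[g gK] : forall b, {a | f a = b}.
  by move=> b; apply: constructive_indefinite_description.
exists g => //; split; last by exists f => // a; apply: f_inj; rewrite gK.
by split=> *; apply: f_inj; rewrite (homD hf, homZ hf, homB hf) !gK.
Qed.

Definition gamma_commIter (L : leibniz K) n (y : nat -> L) : sub (gammaLie L n.+1) :=
  exist _ (commIter y n) (subalg_gen_in (commIter_gamma y n)).

Lemma sub_gamma_mem (L : leibniz K) n (c : sub (gammaLie L n.+1)) :
  gamma_aux n (sval c).
Proof. exact: subalg_gen_id (gamma_subalg L n) (proj2_sig c). Qed.

Lemma sub_gamma_ind (L : leibniz K) n (P : sub (gammaLie L n.+1) -> Prop) :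
  subspace P -> (forall y, P (gamma_commIter n y)) -> forall c, P c.
Proof.
move=> [h0 hA hZ] hP [x hx].
suff [gx Px] : gamma_aux n x /\ forall hx', P (exist _ x hx') by apply: Px.
have [g0 gA gZ] := gamma_subspace L n.
pose G := sub (gammaLie L n.+1).
move: x {hx} (subalg_gen_id (gamma_subalg L n) hx); apply: gamma_ind; first split.
- by split=> // h; have -> : exist _ lzero h = (lzero : G) by apply: sinj.
- move=> x y [gx Px] [gy Py]; split=> [|h]; first exact: gA.
  have -> : exist _ (ladd x y) h = ladd (exist _ x (subalg_gen_in gx) : G)
                                          (exist _ y (subalg_gen_in gy)).
    exact: sinj.
  exact: hA.
- move=> c x [gx Px]; split=> [|h]; first exact: gZ.
  have -> : exist _ (lscale c x) h = lscale c (exist _ x (subalg_gen_in gx) : G).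
    exact: sinj.
  exact: hZ.
- move=> y; split=> [|h]; first exact: commIter_gamma.
  by have -> : exist _ (commIter y n) h = gamma_commIter n y by apply: sinj.
Qed.

Definition commIter_modZ (L : leibniz K) n := forall x x' : nat -> L,
  (forall i, (i <= n)%N -> ZLie L n (lsub (x i) (x' i))) ->
  commIter x n = commIter x' n.

End Constructions.

Section FirstIsomorphism.
Variables (K : fieldType) (A B : leibniz K) (Z : A -> Prop) (pi : A -> B).
Hypotheses (pi_hom : is_hom pi) (pi_onto : forall b, exists a, pi a = b).
Hypothesis pi_ker : forall a, pi a = lzero <-> ideal_gen Z a.

Definition quot_induced (b : B) : quot Z :=
  qproj Z (sval (constructive_indefinite_description _ (pi_onto b))).

Lemma qproj_eq_pi a a' : pi a = pi a' -> qproj Z a = qproj Z a'.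
Proof. by move=> e; apply/qproj_eqP/pi_ker; rewrite (hom_lsub pi_hom) e lsubrr. Qed.

Lemma quot_inducedE a : quot_induced (pi a) = qproj Z a.
Proof.
apply: qproj_eq_pi.
exact: proj2_sig (constructive_indefinite_description _ (pi_onto (pi a))).
Qed.

Lemma quot_induced_iso : is_iso quot_induced.
Proof.
have onto2 b b' : exists a a', pi a = b /\ pi a' = b'.
  by have [a <-] := pi_onto b; have [a' <-] := pi_onto b'; exists a, a'.
split.
  split=> [b b'|c b|b b'].
  - have [a [a' [<- <-]]] := onto2 b b'.
    by rewrite -(homD pi_hom) !quot_inducedE (homD (qproj_hom Z)).
  - have [a <-] := pi_onto b.
    by rewrite -(homZ pi_hom) !quot_inducedE (homZ (qproj_hom Z)).
  - have [a [a' [<- <-]]] := onto2 b b'.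
    by rewrite -(homB pi_hom) !quot_inducedE (homB (qproj_hom Z)).
exists (fun X => pi (rep X)) => [b|X].
  have [a <-] := pi_onto b; rewrite quot_inducedE.
  by apply/lsub0_eq; rewrite -(hom_lsub pi_hom); apply/pi_ker; exact: eqm_rep.
by rewrite quot_inducedE /qproj repK.
Qed.

End FirstIsomorphism.

(* By [ZLie_preimage], [pi] pulls [Z_n(B)] back onto [Z_n(A)], so it induces
   [B/Z_n(B) ~ A/Z_n(A)], and it restricts to [gamma_{n+1}(A) ~ gamma_{n+1}(B)].
   [A_modZ] is needed because the isoclinism condition quantifies over
   arbitrary representatives of the classes. *)
Section IsoclinicImage.
Variables (K : fieldType) (n : nat) (A B : leibniz K) (pi : A -> B).
Hypotheses (pi_hom : is_hom pi) (pi_onto : forall b, exists a, pi a = b).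
Hypothesis pi_gamma_inj : forall c, gamma_aux n c -> pi c = lzero -> c = lzero.
Hypothesis A_modZ : commIter_modZ A n.

Let piZ a : quot (ZLie B n) := qproj (ZLie B n) (pi a).

Let piZ_hom : is_hom piZ.
Proof. exact: hom_comp pi_hom (qproj_hom _). Qed.

Let piZ_onto X : exists a, piZ a = X.
Proof. by have [b <-] := qproj_onto X; have [a <-] := pi_onto b; exists a. Qed.

Let piZ_ker a : piZ a = lzero <-> ideal_gen (ZLie A n) a.
Proof.
rewrite qproj_ker; last exact: ZLie_ideal.
split=> [|/(ideal_gen_id (ZLie_ideal A n))]; last exact: ZLie_image.
by move/(ZLie_preimage pi_hom pi_gamma_inj)/ideal_gen_in.
Qed.

Let pi_gamma (c : sub (gammaLie A n.+1)) : sub (gammaLie B n.+1) :=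
  exist _ (pi (sval c)) (subalg_gen_in (hom_gamma pi_hom (sub_gamma_mem c))).

Let pi_gamma_hom : is_hom pi_gamma.
Proof. by split=> *; apply: sinj; rewrite /= (homD pi_hom, homZ pi_hom, homB pi_hom). Qed.

Let pi_gamma_injective : injective pi_gamma.
Proof.
move=> c c' /(f_equal sval) e; apply: lsub0_eq; apply: sinj.
apply: pi_gamma_inj; first exact: (sub_gamma_mem (lsub c c')).
by move: e => /= e; rewrite (hom_lsub pi_hom) e lsubrr.
Qed.

Let pi_gamma_onto d : exists c, pi_gamma c = d.
Proof.
have [c gc e] := hom_gamma_onto pi_hom pi_onto (sub_gamma_mem d).
by exists (exist _ c (subalg_gen_in gc)); apply: sinj.
Qed.

Lemma isoclinic_image : n_lie_isoclinic n B A.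
Proof.
have [xi' xi'_iso xi'K] := is_iso_inverse pi_gamma_hom pi_gamma_injective pi_gamma_onto.
exists (quot_induced (ZLie A n) piZ_onto), xi'; split=> //.
  exact: quot_induced_iso piZ_hom piZ_onto piZ_ker.
move=> x y hxy c hc.
have /all_sig[a ax] : forall i, {a | pi a = x i}.
  by move=> i; apply: constructive_indefinite_description.
have -> : commIter y n = commIter a n.
  apply: A_modZ => i hi; apply/(qproj_eq_ideal _ _ (ZLie_ideal A n)).
  by rewrite -hxy // -ax (quot_inducedE piZ_hom piZ_onto piZ_ker).
suff -> : xi' c = gamma_commIter n a by [].
apply: pi_gamma_injective; rewrite xi'K; apply: sinj.
by rewrite hc /= (hom_commIter pi_hom); apply: commIter_ext => i _.
Qed.

End IsoclinicImage.

Lemma quot_isoclinic (K : fieldType) n (L : leibniz K) (I : L -> Prop) :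
  ideal I -> (forall c, I c -> gamma_aux n c -> c = lzero) ->
  commIter_modZ L n -> n_lie_isoclinic n (quot I) L.
Proof.
move=> hI hIg hL; apply: (isoclinic_image (qproj_hom I) (@qproj_onto _ _ I)) => // c gc.
by move/(qproj_ker _ hI)/hIg; apply.
Qed.

Section Isoclinism.
Variables (K : fieldType) (n : nat) (L1 L2 : leibniz K).
Variables (eta : quot (ZLie L1 n) -> quot (ZLie L2 n))
  (xi : sub (gammaLie L1 n.+1) -> sub (gammaLie L2 n.+1)).
Hypothesis Hiso : n_lie_isoclinism eta xi.

Lemma isoclinism_commIter (x : nat -> L1) (y : nat -> L2) :
  (forall i, (i <= n)%N -> eta (qproj _ (x i)) = qproj _ (y i)) ->
  sval (xi (gamma_commIter n x)) = commIter y n.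
Proof. by case: Hiso => _ _ Hc hxy; apply: Hc hxy _ _. Qed.

Lemma commIter_modZ_l : commIter_modZ L1 n.
Proof.
case: Hiso => [_ [_ [xi_inv /can_inj xi_inj _]] _] x x' hx.
pose y i := rep (eta (qproj (ZLie L1 n) (x i))).
have hy i : eta (qproj _ (x i)) = qproj _ (y i) by rewrite /qproj repK.
have hy' i : (i <= n)%N -> eta (qproj _ (x' i)) = qproj _ (y i).
  move=> hi; rewrite -hy; congr eta; apply/esym.
  exact/(qproj_eq_ideal _ _ (ZLie_ideal L1 n))/hx.
suff /xi_inj/(f_equal sval) : xi (gamma_commIter n x) = xi (gamma_commIter n x') by [].
by apply: sinj; rewrite (isoclinism_commIter (fun i _ => hy i)) (isoclinism_commIter hy').
Qed.

Lemma commIter_modZ_r : commIter_modZ L2 n.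
Proof.
case: Hiso => [[_ [eta_inv _ eta_invK]] _ _] y y' hy.
pose x i := rep (eta_inv (qproj (ZLie L2 n) (y i))).
have hx i : eta (qproj _ (x i)) = qproj _ (y i) by rewrite /qproj repK eta_invK.
have hx' i : (i <= n)%N -> eta (qproj _ (x i)) = qproj _ (y' i).
  by move=> hi; rewrite hx; apply/(qproj_eq_ideal _ _ (ZLie_ideal L2 n))/hy.
by rewrite -(isoclinism_commIter (fun i _ => hx i)) -(isoclinism_commIter hx').
Qed.

End Isoclinism.

Section IsoclinismGraph.
Variables (K : fieldType) (n : nat) (g1 g2 : leibniz K).
Variables (eta : quot (ZLie g1 n) -> quot (ZLie g2 n))
  (xi : sub (gammaLie g1 n.+1) -> sub (gammaLie g2 n.+1)).
Hypothesis Hiso : n_lie_isoclinism eta xi.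
Let G1 := sub (gammaLie g1 n.+1).

Definition Kset (p : dsum g1 g2) : Prop :=
  eta (qproj (ZLie g1 n) p.1) = qproj (ZLie g2 n) p.2.
Definition Kalg := sub Kset.
Definition Kz1 (p : Kalg) := exists g, ZLie g1 n g /\ sval p = (g, lzero).
Definition Kz2 (p : Kalg) := exists h, ZLie g2 n h /\ sval p = (lzero, h).

Let eta_hom : is_hom eta. Proof. by case: Hiso => -[]. Qed.
Let eta_inj : injective eta. Proof. by case: Hiso => -[_ [eta_inv /can_inj]]. Qed.
Let eta_onto Y : exists X, eta X = Y.
Proof. by case: Hiso => -[_ [eta_inv _ eta_invK]] _ _; exists (eta_inv Y). Qed.
Let xi_hom : is_hom xi. Proof. by case: Hiso => _ []. Qed.
Let xi_inj : injective xi. Proof. by case: Hiso => _ [_ [xi_inv /can_inj]]. Qed.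

Lemma Kset_subalgebra : subalgebra Kset.
Proof. exact: pullback_subalg (hom_comp (qproj_hom _) eta_hom) (qproj_hom _). Qed.

Let Kalg_mem (p : Kalg) : Kset (sval p).
Proof. exact: subalg_gen_id Kset_subalgebra (proj2_sig p). Qed.

Let Kpr1 (p : Kalg) : g1 := (sval p).1.
Let Kpr2 (p : Kalg) : g2 := (sval p).2.

Let Kpr1_hom : is_hom Kpr1. Proof. exact: hom_comp (sval_hom Kset) (fst_hom g1 g2). Qed.
Let Kpr2_hom : is_hom Kpr2. Proof. exact: hom_comp (sval_hom Kset) (snd_hom g1 g2). Qed.

Let lift1_mem (g : g1) : Kset (g, rep (eta (qproj (ZLie g1 n) g))).
Proof. by rewrite /Kset /qproj repK. Qed.

Let lift1 (g : g1) : Kalg := exist _ _ (subalg_gen_in (lift1_mem g)).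

Let Kpr1_onto g : exists p, Kpr1 p = g.
Proof. by exists (lift1 g). Qed.

Let Kpr2_onto h : exists p, Kpr2 p = h.
Proof.
have [X eX] := eta_onto (qproj (ZLie g2 n) h); have [g eg] := qproj_onto X.
have hp : Kset (g, h) by rewrite /Kset /= eg.
by exists (exist (subalg_gen Kset) (g, h) (subalg_gen_in hp)).
Qed.

Let Kpr1_ker p : Kpr1 p = lzero <-> Kz2 p.
Proof.
split=> [e|[h [_ e]]]; last by rewrite /Kpr1 e.
exists (Kpr2 p); split; last first.
  by rewrite [LHS]surjective_pairing -e.
apply/(qproj_ker _ (ZLie_ideal g2 n)).
by rewrite -(Kalg_mem p) -/(Kpr1 p) e (hom0 (qproj_hom _)) (hom0 eta_hom).
Qed.

Let Kpr2_ker p : Kpr2 p = lzero <-> Kz1 p.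
Proof.
split=> [e|[g [_ e]]]; last by rewrite /Kpr2 e.
exists (Kpr1 p); split; last first.
  by rewrite [LHS]surjective_pairing -e.
apply/(qproj_ker _ (ZLie_ideal g1 n))/eta_inj.
by rewrite (Kalg_mem p) -/(Kpr2 p) e (hom0 (qproj_hom _)) (hom0 eta_hom).
Qed.

Lemma Kz1_ideal : ideal Kz1.
Proof.
apply: (ideal_ext _ (idealI (ideal_preimage Kpr1_hom (ZLie_ideal g1 n))
                            (ideal_preimage Kpr2_hom (ideal0 g2)))).
move=> p; split=> [[_ /Kpr2_ker] //|hp]; split; last exact/Kpr2_ker.
by case: hp => g [hg e]; rewrite /Kpr1 e.
Qed.

Lemma Kz2_ideal : ideal Kz2.
Proof.
apply: (ideal_ext _ (idealI (ideal_preimage Kpr1_hom (ideal0 g1))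
                            (ideal_preimage Kpr2_hom (ZLie_ideal g2 n)))).
move=> p; split=> [[/Kpr1_ker] //|hp]; split; first exact/Kpr1_ker.
by case: hp => h [hh e]; rewrite /Kpr2 e.
Qed.

Lemma Kalg_modZ : commIter_modZ Kalg n.
Proof.
move=> x x' hx; apply: sinj.
rewrite !(hom_commIter (sval_hom Kset)) !dsum_commIter; congr pair.
  apply: (commIter_modZ_l Hiso) => i hi; rewrite -(hom_lsub Kpr1_hom).
  exact: ZLie_image Kpr1_hom Kpr1_onto _ _ (hx i hi).
apply: (commIter_modZ_r Hiso) => i hi; rewrite -(hom_lsub Kpr2_hom).
exact: ZLie_image Kpr2_hom Kpr2_onto _ _ (hx i hi).
Qed.

Let gamma_Kalg_graph (p : Kalg) :
  gamma_aux n p -> exists g, sval p = (sval g, sval (xi g)).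
Proof.
move: p; apply: gamma_ind; first split.
- by exists (lzero : G1); rewrite (hom0 xi_hom).
- move=> p q [g eg] [g' eg']; exists (@ladd _ G1 g g').
  by rewrite (homD xi_hom) [sval (ladd p q)]/= eg eg'.
- move=> c p [g eg]; exists (@lscale _ G1 c g).
  by rewrite (homZ xi_hom) [sval (lscale c p)]/= eg.
move=> y; exists (gamma_commIter n (fun i => Kpr1 (y i))).
rewrite (hom_commIter (sval_hom _)) dsum_commIter; congr pair.
by rewrite (isoclinism_commIter Hiso (fun i _ => Kalg_mem (y i))).
Qed.

Let graph_gamma_Kalg g : exists2 p : Kalg, gamma_aux n p & sval p = (sval g, sval (xi g)).
Proof.
have [g0 gA gZ] := gamma_subspace Kalg n.
move: g; apply: sub_gamma_ind; first split.
- by exists lzero; rewrite ?(hom0 xi_hom).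
- move=> g g' [p gp ep] [p' gp' ep']; exists (ladd p p'); first exact: gA.
  by rewrite (homD xi_hom) [sval (ladd p p')]/= ep ep'.
- move=> c g [p gp ep]; exists (lscale c p); first exact: gZ.
  by rewrite (homZ xi_hom) [sval (lscale c p)]/= ep.
move=> y; exists (commIter (fun i => lift1 (y i)) n); first exact: commIter_gamma.
rewrite (hom_commIter (sval_hom _)) dsum_commIter; congr pair.
by rewrite (isoclinism_commIter Hiso (fun i _ => lift1_mem (y i))).
Qed.

Lemma gamma_Kalg (x : dsum g1 g2) :
  (exists p : Kalg, sval p = x /\ gamma_aux n p) <->
  (exists g, x = (sval g, sval (xi g))).
Proof.
split=> [[p [<- /gamma_Kalg_graph]] //|[g ->]].
by have [p gp ep] := graph_gamma_Kalg g; exists p.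
Qed.

Lemma Kz1_gamma p : Kz1 p -> gamma_aux n p -> p = lzero.
Proof.
move=> [g [_ ep]] /gamma_Kalg_graph [g' e]; rewrite ep in e; case: e => e1 e2.
have g'0 : g' = (lzero : G1) by apply: xi_inj; rewrite (hom0 xi_hom); apply: sinj.
by apply: sinj; rewrite ep e1 g'0.
Qed.

Lemma Kz2_gamma p : Kz2 p -> gamma_aux n p -> p = lzero.
Proof.
move=> [h [_ ep]] /gamma_Kalg_graph [g' e]; rewrite ep in e; case: e => e1 e2.
have g'0 : g' = (lzero : G1) by apply: sinj.
by apply: sinj; rewrite ep e2 g'0 (hom0 xi_hom).
Qed.

Lemma isomorphic_quot_Kz2 : isomorphic g1 (quot Kz2).
Proof.
exists (quot_induced Kz2 Kpr1_onto); apply: quot_induced_iso => // p.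
by rewrite Kpr1_ker; split=> [/ideal_gen_in|/(ideal_gen_id Kz2_ideal)].
Qed.

Lemma isomorphic_quot_Kz1 : isomorphic g2 (quot Kz1).
Proof.
exists (quot_induced Kz1 Kpr2_onto); apply: quot_induced_iso => // p.
by rewrite Kpr2_ker; split=> [/ideal_gen_in|/(ideal_gen_id Kz1_ideal)].
Qed.

End IsoclinismGraph.

Theorem mainTheorem7 (K : fieldType) (half_in_K : (2%:R : K) != 0)
  (n : nat) (g1 g2 : leibniz K)
  (eta : quot (ZLie g1 n) -> quot (ZLie g2 n))
  (xi : sub (gammaLie g1 n.+1) -> sub (gammaLie g2 n.+1))
  (Hiso : n_lie_isoclinism eta xi) :
  let Kp : dsum g1 g2 -> Prop :=
    fun p => eta (qproj (ZLie g1 n) p.1) = qproj (ZLie g2 n) p.2 in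
  let KA := sub Kp in
  let Z1 : KA -> Prop := fun p => exists g, ZLie g1 n g /\ sval p = (g, lzero) in
  let Z2 : KA -> Prop := fun p => exists h, ZLie g2 n h /\ sval p = (lzero, h) in
  [/\ (* (a) *)
      subalgebra Kp,
      (* (b) *)
      (forall x : dsum g1 g2,
         (exists p : KA, sval p = x /\ gammaLie KA n.+1 p) <->
         (exists g : sub (gammaLie g1 n.+1), x = (sval g, sval (xi g)))),
      (* (c) *)
      [/\ ideal Z1, ideal Z2,
          (forall p, Z1 p -> gammaLie KA n.+1 p -> p = lzero)
        & (forall p, Z2 p -> gammaLie KA n.+1 p -> p = lzero)]
    & (* (d) *)
      [/\ isomorphic g1 (quot Z2), n_lie_isoclinic n (quot Z2) KA,
          isomorphic g2 (quot Z1) & n_lie_isoclinic n (quot Z1) KA]].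
Proof.
have KA_modZ := Kalg_modZ Hiso.
split; [exact: Kset_subalgebra Hiso | exact: gamma_Kalg Hiso | split | split].
- exact: Kz1_ideal Hiso.
- exact: Kz2_ideal Hiso.
- exact: Kz1_gamma Hiso.
- exact: Kz2_gamma Hiso.
- exact: isomorphic_quot_Kz2 Hiso.
- exact: quot_isoclinic (Kz2_ideal Hiso) (Kz2_gamma Hiso) KA_modZ.
- exact: isomorphic_quot_Kz1 Hiso.
- exact: quot_isoclinic (Kz1_ideal Hiso) (Kz1_gamma Hiso) KA_modZ.
Qed.
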